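(* For every integer $n\ge1$, \[ \sum_{m=1}^{\infty}\frac{(-1)^{m+1}\,2n}{(m+1)(m+2n+1)}H_m=2\ln2\sum_{k=0}^{n-1}\frac{1}{2k+1}-\sum_{j=1}^{2n}\frac1j\sum_{k=1}^{j}\frac{(-1)^{k-1}}{k}. \]
   Context: $H_m=\sum_{j=1}^m 1/j$ is the $m$-th harmonic number. *)

From Stdlib Require Import Reals Lra Lia.
Open Scope R_scope.

Fixpoint H (m : nat) : R :=
  match m with
  | O => 0
  | S k => H k + / INR (S k)
  end.

Fixpoint altH (j : nat) : R :=
  match j with
  | O => 0
  | S k => altH k + (-1) ^ k / INR (S k)
  end.

Definition term (n m : nat) : R :=
  (-1) ^ (m + 1) * (2 * INR n) / ((INR m + 1) * (INR m + 2 * INR n + 1)) * H m.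

From Stdlib Require Import Reals Lra Lia.
Open Scope R_scope.

(* By partial fractions, 2n / ((m+1)(m+2n+1)) = 1/(m+1) - 1/(m+2n+1), so the
   N-th partial sum of the series is P 1 - P (2n+1), where
   P a N = sum_{k<N} (-1)^k H_{k+1} / (k+1+a).  Since H_{k+1} - H_k = 1/(k+1),
   Abel summation gives P a + P (a+1) = Q a + (boundary term), with
   Q a N = sum_{k<N} (-1)^k / ((k+1)(k+1+a)); and P 1 - P (2n+1) telescopes as
   the alternating sum over a < 2n of P (a+1) + P (a+2).  For integer a >= 1,
   a second partial fraction expresses Q a through the alternating harmonic
   numbers altH, which converge to ln 2; the boundary terms are O(H_N / N) and
   vanish by Cesaro.  Passing to the limit in each of the 2n summands and
   regrouping them in pairs yields the closed form. *)

Lemma Un_cv_of_rate (u : nat -> R) (l C : R) : 0 < C ->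
  (forall M, (2 <= M)%nat -> Rabs (u M - l) <= C / INR M) -> Un_cv u l.
Proof.
  intros hC hrate eps heps.
  destruct (archimed_cor1 (eps / C)) as [N [hN1 hN2]].
  { apply Rdiv_lt_0_compat; lra. }
  exists (N + 2)%nat. intros M hM. unfold Rdist.
  eapply Rle_lt_trans; [apply hrate; lia|].
  assert (hNM : INR N <= INR M) by (apply le_INR; lia).
  assert (hN0 : 0 < INR N) by (apply lt_0_INR; lia).
  apply Rle_lt_trans with (C / INR N).
  - unfold Rdiv. apply Rmult_le_compat_l; [lra|]. apply Rinv_le_contravar; lra.
  - apply Rmult_lt_reg_r with (/ C); [apply Rinv_0_lt_compat; lra|].
    replace (C / INR N * / C) with (/ INR N) by (field; lra). exact hN1.
Qed.

Lemma Un_cv_const (c : R) : Un_cv (fun _ => c) c.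
Proof.
  intros eps heps. exists O. intros. unfold Rdist.
  rewrite Rminus_diag, Rabs_R0. lra.
Qed.

Lemma Un_cv_dominated_0 (v w : nat -> R) :
  (forall N, Rabs (v N) <= w N) -> Un_cv w 0 -> Un_cv v 0.
Proof.
  intros hdom hw eps heps. destruct (hw eps heps) as [N0 hN0]. exists N0.
  intros N hN. specialize (hN0 N hN). specialize (hdom N).
  unfold Rdist in *. rewrite Rminus_0_r in *.
  pose proof (RRle_abs (w N)). lra.
Qed.

Lemma sum_f_R0_S (f : nat -> R) (k : nat) : sum_f_R0 f (S k) = sum_f_R0 f k + f (S k).
Proof. reflexivity. Qed.

Lemma Un_cv_sum_f_R0 (K : nat) (u : nat -> nat -> R) (l : nat -> R) :
  (forall a, Un_cv (u a) (l a)) ->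
  Un_cv (fun N => sum_f_R0 (fun a => u a N) K) (sum_f_R0 l K).
Proof.
  intros hu. induction K as [|K IH]; simpl.
  - apply hu.
  - apply CV_plus; [exact IH | apply hu].
Qed.

Lemma H_S (k : nat) : H (S k) = H k + / INR (S k).
Proof. reflexivity. Qed.

Lemma altH_S (k : nat) : altH (S k) = altH k + (-1) ^ k / INR (S k).
Proof. reflexivity. Qed.

Lemma H_nonneg (k : nat) : 0 <= H k.
Proof.
  induction k as [|k IH]; [simpl; lra|]. rewrite H_S.
  assert (0 < / INR (S k)) by (apply Rinv_0_lt_compat, lt_0_INR; lia). lra.
Qed.

(* Tangent-line bound for ln at x (from exp t >= 1 + t). *)
Lemma ln_sub_le (x y : R) : 0 < x -> 0 < y -> ln y - ln x <= (y - x) / x.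
Proof.
  intros hx hy.
  assert (hyx : 0 < y / x) by (apply Rdiv_lt_0_compat; lra).
  assert (hsplit : ln y = ln x + ln (y / x)).
  { rewrite <- ln_mult by lra. f_equal. field. lra. }
  pose proof (exp_ineq1_le (ln (y / x))) as hexp.
  rewrite exp_ln in hexp by exact hyx.
  replace ((y - x) / x) with (y / x - 1) by (field; lra).
  rewrite hsplit. lra.
Qed.

Lemma H_ln_bounds (N M : nat) : (1 <= N)%nat ->
  ln (INR (N + M) + 1) - ln (INR N + 1) <= H (N + M) - H N
  <= ln (INR (N + M)) - ln (INR N).
Proof.
  intros hN. assert (hN1 : 1 <= INR N) by (apply (le_INR 1); lia).
  induction M as [|M IH].
  - rewrite Nat.add_0_r. lra.
  - rewrite Nat.add_succ_r, H_S, S_INR.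
    set (k := INR (N + M)) in *.
    assert (hk : INR N <= k) by (apply le_INR; lia).
    pose proof (ln_sub_le (k + 1) (k + 1 + 1) ltac:(lra) ltac:(lra)) as hup.
    pose proof (ln_sub_le (k + 1) k ltac:(lra) ltac:(lra)) as hdown.
    replace ((k + 1 + 1 - (k + 1)) / (k + 1)) with (/ (k + 1)) in hup by (field; lra).
    replace ((k - (k + 1)) / (k + 1)) with (- / (k + 1)) in hdown by (field; lra).
    split; lra.
Qed.

Lemma altH_double (N : nat) : altH (2 * N) = H (2 * N) - H N.
Proof.
  induction N as [|N IH]; [simpl; ring|].
  replace (2 * S N)%nat with (S (S (2 * N))) by lia.
  rewrite !altH_S, !H_S, IH, pow_1_odd, pow_1_even, !S_INR, mult_INR.
  assert (0 <= INR N) by apply pos_INR.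
  change (INR 2) with 2. field. lra.
Qed.

Lemma altH_double_ln2 (N : nat) : (1 <= N)%nat ->
  Rabs (altH (2 * N) - ln 2) <= / (2 * INR N + 1).
Proof.
  intros hN. assert (hN1 : 1 <= INR N) by (apply (le_INR 1); lia).
  rewrite altH_double.
  destruct (H_ln_bounds N N hN) as [lo hi].
  replace (N + N)%nat with (2 * N)%nat in * by lia.
  rewrite mult_INR in *. change (INR 2) with 2 in *.
  rewrite ln_mult in hi by lra.
  pose proof (ln_sub_le (2 * INR N + 1) (2 * (INR N + 1)) ltac:(lra) ltac:(lra)) as hup.
  rewrite ln_mult in hup by lra.
  replace ((2 * (INR N + 1) - (2 * INR N + 1)) / (2 * INR N + 1))
    with (/ (2 * INR N + 1)) in hup by (field; lra).
  apply Rabs_le. split; lra.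
Qed.

Lemma altH_ln2_rate (M : nat) : (2 <= M)%nat -> Rabs (altH M - ln 2) <= 2 / INR M.
Proof.
  intros hM.
  destruct (Nat.Even_or_Odd M) as [[N ->]|[N ->]];
    assert (hN : (1 <= N)%nat) by lia;
    assert (hN1 : 1 <= INR N) by (apply (le_INR 1); lia);
    pose proof (altH_double_ln2 N hN) as heven.
  - eapply Rle_trans; [exact heven|].
    rewrite mult_INR. change (INR 2) with 2.
    apply Rle_trans with (/ (2 * INR N)); [apply Rinv_le_contravar; lra|].
    assert (0 < / (2 * INR N)) by (apply Rinv_0_lt_compat; lra). unfold Rdiv. lra.
  - replace (2 * N + 1)%nat with (S (2 * N)) by lia.
    rewrite altH_S, pow_1_even, S_INR, mult_INR. change (INR 2) with 2.
    assert (hpos : 0 < / (2 * INR N + 1)) by (apply Rinv_0_lt_compat; lra).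
    replace (altH (2 * N) + 1 / (2 * INR N + 1) - ln 2)
      with ((altH (2 * N) - ln 2) + / (2 * INR N + 1)) by (field; lra).
    eapply Rle_trans; [apply Rabs_triang|].
    rewrite (Rabs_right (/ _)) by lra.
    replace (2 / (2 * INR N + 1)) with (/ (2 * INR N + 1) + / (2 * INR N + 1))
      by (field; lra).
    lra.
Qed.

Lemma altH_cv : Un_cv altH (ln 2).
Proof. apply Un_cv_of_rate with 2; [lra | exact altH_ln2_rate]. Qed.

(* H written with sum_f_R0, the form used by Cesaro's lemma. *)
Lemma sum_inv_eq_H (k : nat) : sum_f_R0 (fun i => / INR (S i)) k = H (S k).
Proof.
  induction k as [|k IH]; [simpl; ring|].
  rewrite sum_f_R0_S, IH. reflexivity.
Qed.

(* H_N / N -> 0: the Cesaro mean of 1/k. *)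
Lemma H_div_cv : Un_cv (fun N => H (S N) / INR (S N)) 0.
Proof.
  assert (hinv : Un_cv (fun i => / INR (S i)) 0).
  { apply Un_cv_of_rate with 1; [lra|]. intros M hM. rewrite Rminus_0_r.
    assert (0 < INR M) by (apply lt_0_INR; lia).
    rewrite Rabs_right by (left; apply Rinv_0_lt_compat, lt_0_INR; lia).
    rewrite S_INR. unfold Rdiv. rewrite Rmult_1_l.
    left. apply Rinv_lt_contravar; nra. }
  pose proof (CV_shift' _ 1 _ (Cesaro_1 _ _ hinv)) as hmean.
  apply Un_cv_ext with (2 := hmean). intros N.
  rewrite Nat.add_1_r. simpl pred. rewrite sum_inv_eq_H. reflexivity.
Qed.

Fixpoint P (a : R) (N : nat) : R :=
  match N with
  | O => 0
  | S k => P a k + (-1) ^ k * H (S k) / (INR (S k) + a)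
  end.

Fixpoint Q (a : R) (N : nat) : R :=
  match N with
  | O => 0
  | S k => Q a k + (-1) ^ k / (INR (S k) * (INR (S k) + a))
  end.

Lemma sign_sq (k : nat) : (-1) ^ k * (-1) ^ k = 1.
Proof. rewrite <- Rpow_mult_distr. replace (-1 * -1) with 1 by ring. apply pow1. Qed.

(* Partial fractions: the partial sums of the series are P 1 - P (2n+1). *)
Lemma term_partial_sum (n N : nat) :
  sum_f_R0 (fun i => term n (S i)) N = P 1 (S N) - P (2 * INR n + 1) (S N).
Proof.
  assert (hn : 0 <= INR n) by apply pos_INR.
  induction N as [|N IH].
  - unfold term. simpl. field. lra.
  - rewrite sum_f_R0_S, IH. unfold term.
    change (P ?a (S (S N))) with (P a (S N) + (-1) ^ S N * H (S (S N)) / (INR (S (S N)) + a)).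
    replace (S (S N) + 1)%nat with (S (S (S N))) by lia.
    assert (0 <= INR (S (S N))) by apply pos_INR.
    simpl pow. field. lra.
Qed.

(* Abel summation using H_{k+1} - H_k = 1/(k+1). *)
Lemma P_shift_sum (a : R) (N : nat) : 0 < a ->
  P a N + P (a + 1) N = Q a (S N) + (-1) ^ S N * H (S N) / (INR (S N) + a).
Proof.
  intros ha. induction N as [|N IH]; [simpl; field; lra|].
  change (P ?b (S N)) with (P b N + (-1) ^ N * H (S N) / (INR (S N) + b)).
  change (Q a (S (S N))) with
    (Q a (S N) + (-1) ^ S N / (INR (S (S N)) * (INR (S (S N)) + a))).
  rewrite (H_S (S N)).
  replace (Q a (S N)) with (P a N + P (a + 1) N - (-1) ^ S N * H (S N) / (INR (S N) + a))
    by lra.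
  assert (0 <= INR N) by apply pos_INR.
  rewrite !S_INR. simpl pow. field. lra.
Qed.

(* For integer k >= 1, 1/(j(j+k)) = (1/j - 1/(j+k))/k gives Q through altH. *)
Lemma Q_altH (k N : nat) : (1 <= k)%nat ->
  Q (INR k) N = / INR k * (altH N - (-1) ^ k * (altH (N + k) - altH k)).
Proof.
  intros hk. assert (1 <= INR k) by (apply (le_INR 1); lia).
  induction N as [|N IH]; [simpl; field; lra|].
  change (Q (INR k) (S N)) with (Q (INR k) N + (-1) ^ N / (INR (S N) * (INR (S N) + INR k))).
  rewrite IH. simpl (S N + k)%nat. rewrite !altH_S, pow_add, !S_INR, plus_INR.
  assert (0 <= INR N) by apply pos_INR.
  pose proof (sign_sq k) as hsq.
  replace (/ INR k * (altH N + (-1) ^ N / (INR N + 1)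
             - (-1) ^ k * (altH (N + k) + (-1) ^ N * (-1) ^ k / (INR N + INR k + 1)
                           - altH k)))
    with (/ INR k * (altH N - (-1) ^ k * (altH (N + k) - altH k))
          + / INR k * ((-1) ^ N / (INR N + 1)
                       - ((-1) ^ k * (-1) ^ k) * (-1) ^ N / (INR N + INR k + 1)))
    by (field; lra).
  rewrite hsq. field. lra.
Qed.

Lemma alt_telescope (f : R -> R) (K : nat) :
  sum_f_R0 (fun a => (-1) ^ a * (f (INR a + 1) + f (INR a + 2))) K
  = f 1 - (-1) ^ S K * f (INR K + 2).
Proof.
  induction K as [|K IH].
  - simpl. replace (0 + 1) with 1 by ring. replace (0 + 2) with 2 by ring. ring.
  - rewrite sum_f_R0_S, IH. replace (INR (S K) + 1) with (INR K + 2) by (rewrite S_INR; ring).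
    simpl pow. ring.
Qed.

(* The a-th summand (-1)^a (P (a+1) + P (a+2)) at truncation N + 1, in the
   form given by P_shift_sum. *)
Definition summand (a N : nat) : R :=
  (-1) ^ a * (Q (INR (S a)) (S (S N))
              + (-1) ^ S (S N) * H (S (S N)) / (INR (S (S N)) + INR (S a))).

Lemma term_partial_sum_summands (n N : nat) : (1 <= n)%nat ->
  sum_f_R0 (fun i => term n (S i)) N = sum_f_R0 (fun a => summand a N) (2 * n - 1).
Proof.
  intros hn. rewrite term_partial_sum.
  replace (2 * INR n + 1) with (INR (2 * n - 1) + 2)
    by (rewrite minus_INR by lia; rewrite mult_INR; simpl; ring).
  replace (P (INR (2 * n - 1) + 2) (S N))
    with ((-1) ^ S (2 * n - 1) * P (INR (2 * n - 1) + 2) (S N))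
    by (replace (S (2 * n - 1)) with (2 * n)%nat by lia; rewrite pow_1_even; ring).
  rewrite <- (alt_telescope (fun a => P a (S N)) (2 * n - 1)).
  apply sum_eq. intros a _. unfold summand. rewrite (S_INR a).
  replace (INR a + 2) with (INR a + 1 + 1) by ring.
  rewrite P_shift_sum by (pose proof (pos_INR a); lra). reflexivity.
Qed.

Definition summand_limit (a : nat) : R :=
  ((-1) ^ a + 1) * ln 2 / INR (S a) - / INR (S a) * altH (S a).

Lemma Q_cv (a : nat) :
  Un_cv (fun N => Q (INR (S a)) (S (S N)))
    (/ INR (S a) * (ln 2 - (-1) ^ S a * (ln 2 - altH (S a)))).
Proof.
  apply Un_cv_ext with
    (fun N => / INR (S a) * (altH (N + 2) - (-1) ^ S a * (altH (N + (S a + 2)) - altH (S a)))).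
  { intros N. rewrite Q_altH by lia. do 5 f_equal; lia. }
  apply CV_mult; [apply Un_cv_const|]. apply CV_minus.
  - exact (CV_shift' _ 2 _ altH_cv).
  - apply CV_mult; [apply Un_cv_const|]. apply CV_minus; [|apply Un_cv_const].
    exact (CV_shift' _ (S a + 2) _ altH_cv).
Qed.

(* The boundary terms of Abel summation are O(H_N / N), hence vanish. *)
Lemma boundary_cv (a : nat) :
  Un_cv (fun N => (-1) ^ S (S N) * H (S (S N)) / (INR (S (S N)) + INR (S a))) 0.
Proof.
  apply Un_cv_dominated_0 with (fun N => H (S (N + 1)) / INR (S (N + 1))).
  - intros N. rewrite Nat.add_1_r.
    assert (hH := H_nonneg (S (S N))).
    assert (hp : 0 < INR (S (S N))) by (apply lt_0_INR; lia).
    assert (hq : 0 <= INR (S a)) by apply pos_INR.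
    unfold Rdiv. rewrite !Rabs_mult, pow_1_abs, Rmult_1_l, Rabs_right by lra.
    rewrite Rabs_right by (left; apply Rinv_0_lt_compat; lra).
    apply Rmult_le_compat_l; [lra|]. apply Rinv_le_contravar; lra.
  - exact (CV_shift' (fun N => H (S N) / INR (S N)) 1 0 H_div_cv).
Qed.

Lemma summand_cv (a : nat) : Un_cv (summand a) (summand_limit a).
Proof.
  assert (hlim : summand_limit a
    = (-1) ^ a * (/ INR (S a) * (ln 2 - (-1) ^ S a * (ln 2 - altH (S a))) + 0)).
  { unfold summand_limit. pose proof (sign_sq a) as hsq.
    assert (0 < INR (S a)) by (apply lt_0_INR; lia).
    simpl pow.
    replace ((-1) ^ a * (/ INR (S a) * (ln 2 - -1 * (-1) ^ a * (ln 2 - altH (S a))) + 0))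
      with ((-1) ^ a * / INR (S a) * ln 2
            + ((-1) ^ a * (-1) ^ a) * / INR (S a) * (ln 2 - altH (S a))) by ring.
    rewrite hsq. field. lra. }
  rewrite hlim. unfold summand.
  apply CV_mult; [apply Un_cv_const|].
  apply CV_plus; [apply Q_cv | apply boundary_cv].
Qed.

(* Pairing the limits a = 2k, 2k+1 yields the closed form. *)
Lemma sum_summand_limit (m : nat) :
  sum_f_R0 summand_limit (2 * m + 1)
  = 2 * ln 2 * sum_f_R0 (fun k => / (2 * INR k + 1)) m
    - sum_f_R0 (fun i => / INR (S i) * altH (S i)) (2 * m + 1).
Proof.
  unfold summand_limit.
  induction m as [|m IH]; [simpl; field|].
  replace (2 * S m + 1)%nat with (S (S (2 * m + 1))) by lia.
  rewrite !sum_f_R0_S, IH.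
  replace (S (2 * m + 1)) with (2 * S m)%nat by lia.
  rewrite pow_1_odd, pow_1_even, !S_INR, !mult_INR, !S_INR.
  assert (0 <= INR m) by apply pos_INR.
  simpl (INR 0). field. lra.
Qed.

Theorem proposition7 (n : nat) (hn : (1 <= n)%nat) :
  infinite_sum (fun i => term n (S i))
    (2 * ln 2 * sum_f_R0 (fun k => / (2 * INR k + 1)) (n - 1)
     - sum_f_R0 (fun i => / INR (S i) * altH (S i)) (2 * n - 1)).
Proof.
  assert (hcv : Un_cv (fun N => sum_f_R0 (fun i => term n (S i)) N)
                      (sum_f_R0 summand_limit (2 * n - 1))).
  { apply Un_cv_ext with (fun N => sum_f_R0 (fun a => summand a N) (2 * n - 1)).
    - intros N. symmetry. apply term_partial_sum_summands, hn.
    - apply Un_cv_sum_f_R0, summand_cv. }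
  destruct n as [|m]; [lia|].
  replace (2 * S m - 1)%nat with (2 * m + 1)%nat in * by lia.
  replace (S m - 1)%nat with m by lia.
  rewrite sum_summand_limit in hcv. exact hcv.
Qed.
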